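(* Let $\pi\sim M(\phi,\sigma)$ be a ranking of $[m]$ drawn from the Mallows model, and let $1\le\tau\le m$. Then for all $s\le m$, the probability that none of the top $s$ items of the reference ranking $\sigma$ appears among the top $\tau$ positions of $\pi$ satisfies $$\Pr\big(\text{each of the items ranked }1,\dots,s\text{ in }\sigma\text{ is ranked below position }\tau\text{ in }\pi\big)\le\begin{cases}\phi^{\tau s}(1-\phi^{m-\tau})^s/(1-\phi^m)^s&\text{if }\phi<1,\\ (1-\tau/m)^s&\text{if }\phi=1.\end{cases}$$
   Context: The Mallows model $M(\phi,\sigma)$ on rankings of $[m]$, with reference ranking $\sigma$ and dispersion parameter $\phi\in[0,1]$, assigns to a ranking $\pi$ probability $\phi^{d(\pi,\sigma)}/Z(\phi)$, where $d$ is the Kendall-tau distance (the number of pairs of items ordered differently by the two rankings) and $Z(\phi)=\prod_{j=1}^{m}(1+\phi+\dots+\phi^{j-1})$ is the normalizing constant. *)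

From mathcomp Require Import all_boot all_order all_algebra all_fingroup.
Set Implicit Arguments. Unset Strict Implicit. Unset Printing Implicit Defensive.
Import Order.TTheory GRing.Theory Num.Theory.
Local Open Scope ring_scope.

(* A ranking of the m items 'I_m is a permutation p : 'S_m, where p a is the
   (0-indexed) position of item a; position 0 is the top. *)

Definition kendall (m : nat) (p q : 'S_m) : nat :=
  #|[set ab : 'I_m * 'I_m | (ab.1 < ab.2)%N &&
       ((p ab.1 < p ab.2)%N != (q ab.1 < q ab.2)%N)]|.

Definition mallows_Z (R : realFieldType) (phi : R) (m : nat) : R :=
  \prod_(j < m) \sum_(k < j.+1) phi ^+ k.

Definition mallows_pmf (R : realFieldType) (m : nat) (phi : R) (sigma p : 'S_m) : R :=
  phi ^+ (kendall p sigma) / mallows_Z phi m.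

Definition mallows_prob (R : realFieldType) (m : nat) (phi : R) (sigma : 'S_m)
  (E : {set 'S_m}) : R :=
  \sum_(p in E) mallows_pmf phi sigma p.

(* Event: every item among the top s of sigma (sigma-position < s) is ranked
   strictly below position tau in p, i.e. has 0-indexed position >= tau. *)
Definition top_s_below (m : nat) (sigma : 'S_m) (s tau : nat) : {set 'S_m} :=
  [set p : 'S_m | [forall a : 'I_m, (sigma a < s)%N ==> (tau <= p a)%N]].

From mathcomp Require Import all_boot all_order all_algebra all_fingroup.
From mathcomp Require Import zify ring lra.
Import Order.TTheory GRing.Theory Num.Theory.
Set Implicit Arguments. Unset Strict Implicit. Unset Printing Implicit Defensive.

(* Relabelling the items by sigma^-1 reduces everything to sigma = 1, where
   the Kendall distance counts inversions.  Writing a ranking of m+1 items as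
   lift_perm x 0 r, with x the item placed first and r the ranking of the other
   m items, the inversions split as x + inv r.  Hence, with
   G n = 1 + phi + ... + phi^(n-1), Z_(m+1) = G (m+1) * Z_m, and since the event
   for (s, tau+1) holds iff x >= s and r satisfies the event for (s, tau),
   P_(m+1)(s, tau+1) = phi^s * G (m+1-s) / G (m+1) * P_m(s, tau).
   For 0 <= phi <= 1 the ratio G k / G (k+1) is nondecreasing in k, so
   G (n-s) / G n <= (G (n-1) / G n)^s; the product then telescopes to
   phi^(s tau) * (G (m-tau) / G m)^s, and 1 - phi^n = (1 - phi) * G n. *)

Section OrderedPairs.
Variables (m : nat) (D : rel 'I_m).
Hypotheses (symD : symmetric D) (irrD : irreflexive D).

Lemma card_ltn_pairs_double :
  (#|[set ab : 'I_m * 'I_m | (ab.1 < ab.2)%N && D ab.1 ab.2]|.*2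
   = #|[set ab : 'I_m * 'I_m | D ab.1 ab.2]|)%N.
Proof.
set A := [set ab : 'I_m * 'I_m | _].
pose swap (ab : 'I_m * 'I_m) := (ab.2, ab.1).
have swapK : involutive swap by case.
have -> : [set ab : 'I_m * 'I_m | D ab.1 ab.2] = A :|: swap @^-1: A.
  apply/setP => -[a b]; rewrite !inE /= [D b a]symD.
  by case: (ltngtP a b) => [||/val_inj ->]; rewrite ?irrD ?andbF ?orbF.
rewrite cardsU (card_preimset _ (inv_inj swapK)) -addnn.
suff -> : A :&: swap @^-1: A = set0 by rewrite cards0 subn0.
by apply/setP => -[a b]; rewrite !inE /=; case: ltngtP; rewrite ?andbF.
Qed.

End OrderedPairs.

Lemma perm_ltn_flip (m : nat) (f : 'S_m) (a b : 'I_m) :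
  a != b -> (f b < f a)%N = ~~ (f a < f b)%N.
Proof.
by move=> nab; rewrite ltnNge leq_eqVlt val_eqE (inj_eq perm_inj) (negbTE nab).
Qed.

Lemma discordant_sym (m : nat) (p sigma : 'S_m) :
  symmetric (fun a b => (p a < p b)%N != (sigma a < sigma b)%N).
Proof.
move=> a b; case: (eqVneq a b) => [-> //|nab].
by rewrite !(perm_ltn_flip _ nab); case: (_ < _)%N; case: (_ < _)%N.
Qed.

Lemma kendall_relabel (m : nat) (r p sigma : 'S_m) :
  kendall (r * p) (r * sigma) = kendall p sigma.
Proof.
pose D (f g : 'S_m) a b := (f a < f b)%N != (g a < g b)%N.
have irrD (f g : 'S_m) : irreflexive (D f g) by move=> a; rewrite /D !ltnn.
apply: double_inj.
rewrite /kendall !(card_ltn_pairs_double (discordant_sym _ _) (irrD _ _)).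
pose rr (ab : 'I_m * 'I_m) := (r ab.1, r ab.2).
have inj_rr : injective rr by move=> [a b] [c d] [/perm_inj -> /perm_inj ->].
rewrite -[RHS](card_preimset _ inj_rr).
by apply: eq_card => -[a b]; rewrite !inE /= !permM.
Qed.

Lemma kendall1E (m : nat) (q : 'S_m) :
  kendall q 1 = (\sum_(a < m) \sum_(b < m) ((a < b) && (q b < q a)))%N.
Proof.
rewrite /kendall -sum1_card big_mkcond pair_big /=.
apply: eq_big => // -[a b] _; rewrite inE !perm1 /=.
case: (ltngtP a b) => [ab|//|/val_inj->]; last by rewrite ltnn.
by rewrite (perm_ltn_flip _ (negbT (ltn_eqF ab))); case: (_ < _)%N.
Qed.

Lemma sum_ltn_ord (m x : nat) : (\sum_(i < m) (i < x) = minn x m)%N.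
Proof.
elim: m => [|m IHm]; first by rewrite big_ord0 minn0.
by rewrite big_ord_recr /= IHm; case: (ltnP m x); lia.
Qed.

Lemma kendall_lift_perm (m : nat) (x : 'I_m.+1) (r : 'S_m) :
  kendall (lift_perm x ord0 r) 1 = (x + kendall r 1)%N.
Proof.
rewrite !kendall1E (bigD1_ord x) //= lift_perm_id big1 ?add0n; last first.
  by move=> b _; rewrite ltn0 andbF.
have ltn_bump2 (i j : nat) : (bump x i < bump x j)%N = (i < j)%N.
  by rewrite !ltnNge leq_bump2.
transitivity (\sum_(i < m) ((i < x) + \sum_(j < m) ((i < j) && (r j < r i))))%N.
  apply: eq_bigr => i _; rewrite (bigD1_ord x) //= lift_perm_id lift_perm_lift /=.
  congr (_ + _); first by rewrite andbT /bump; case: leqP; lia.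
  by apply: eq_bigr => j _; rewrite lift_perm_lift /= ltn_bump2.
by rewrite big_split /= sum_ltn_ord (minn_idPl (ltn_ord x : (x <= m)%N)).
Qed.

Lemma top_s_below0 (m s : nat) (sigma : 'S_m) : top_s_below sigma s 0 = setT.
Proof. by apply/setP => q; rewrite !inE; apply/forallP => a; rewrite implybT. Qed.

Lemma lift_perm_top_s_below (m s tau : nat) (x : 'I_m.+1) (r : 'S_m) :
  (lift_perm x ord0 r \in top_s_below 1 s tau.+1) =
  (s <= x)%N && (r \in top_s_below 1 s tau).
Proof.
have bump_small (i : nat) : (i < s)%N -> (s <= x)%N -> bump x i = i.
  by move=> ltis sx; rewrite /bump leqNgt (leq_trans ltis sx).
rewrite !inE; apply/forallP/andP => [top | [sx /forallP top] a].
  have sx : (s <= x)%N.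
    by have := top x; rewrite perm1 lift_perm_id ltn0 implybF -leqNgt.
  split=> //; apply/forallP => i; rewrite perm1; apply/implyP => ltis.
  by have := top (lift x i); rewrite perm1 lift_perm_lift /= bump_small // ltis ltnS.
rewrite perm1; case: (unliftP x a) => [i|] ->; last by rewrite ltnNge sx.
rewrite lift_perm_lift /= ltnS; apply/implyP => ltis.
have /implyP := top i; rewrite perm1; apply.
by apply: leq_ltn_trans ltis; rewrite /bump leq_addl.
Qed.

Lemma top_s_below_mul (m s tau : nat) (sigma q : 'S_m) :
  ((sigma * q)%g \in top_s_below sigma s tau) = (q \in top_s_below 1 s tau).
Proof.
rewrite !inE; apply/forallP/forallP => top i.
  by have := top ((sigma^-1)%g i); rewrite permM permKV perm1.
by rewrite permM; have := top (sigma i); rewrite perm1.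
Qed.

Local Open Scope ring_scope.

Lemma lift_perm_onto (n : nat) (i j : 'I_n.+1) :
  {on [pred s : 'S_n.+1 | s i == j], bijective (lift_perm i j)}.
Proof.
pose restr h (s : 'S_n.+1) k := odflt k (unlift (s h) (s (lift h k))).
have restrK h (s : 'S_n.+1) k : lift (s h) (restr h s k) = s (lift h k).
  rewrite /restr; have := neq_lift h k.
  by rewrite -(can_eq (permK s)) => /unlift_some[] ? ? ->.
have inj_restr (s : 'S_n.+1) : injective (restr i s).
  apply: can_inj (restr (s i) s^-1%g) _ => k.
  by rewrite {1}/restr restrK !permK liftK.
exists (fun s => perm (inj_restr s)) => [s _ | s /eqP sij].
  by apply/permP => k; rewrite permE /restr lift_perm_lift lift_perm_id liftK.
apply/permP => k; case: (unliftP i k) => [k'|] ->; rewrite ?lift_perm_id //.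
by rewrite lift_perm_lift -sij permE restrK.
Qed.

Lemma sum_perm_lift_perm (V : nmodType) (n : nat) (P : pred 'S_n.+1)
    (F : 'S_n.+1 -> V) :
  \sum_(q | P q) F q =
  \sum_(x : 'I_n.+1) \sum_(r : 'S_n | P (lift_perm x ord0 r)) F (lift_perm x ord0 r).
Proof.
rewrite (partition_big (fun q : 'S_n.+1 => (q^-1)%g ord0) xpredT) //=.
apply: eq_bigr => x _.
rewrite (reindex (lift_perm x ord0)) /=.
  by apply: eq_bigl => r; rewrite lift_permV lift_perm_id eqxx andbT.
apply: subon_bij (lift_perm_onto x ord0) => q; rewrite !inE => /andP[_ /eqP <-].
by rewrite permKV.
Qed.

Section GeomSum.
Variables (R : realFieldType) (phi : R).

Definition geom_sum (n : nat) : R := \sum_(k < n) phi ^+ k.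

Lemma geom_sumS n : geom_sum n.+1 = geom_sum n + phi ^+ n.
Proof. by rewrite /geom_sum big_ord_recr. Qed.

Lemma geom_sumD a b : geom_sum (a + b) = geom_sum a + phi ^+ a * geom_sum b.
Proof.
rewrite /geom_sum big_split_ord mulr_sumr; congr (_ + _).
by apply: eq_bigr => i _; rewrite exprD.
Qed.

Lemma geom_sum_tail (s n : nat) :
  \sum_(x < n | (s <= x)%N) phi ^+ x = phi ^+ s * geom_sum (n - s).
Proof.
elim: n => [|n IHn]; first by rewrite big_ord0 /geom_sum big_ord0 mulr0.
rewrite big_mkcond big_ord_recr /= -big_mkcond IHn.
case: (leqP s n) => [sn|ns]; last by rewrite addr0 (_ : n.+1 - s = n - s)%N //; lia.
by rewrite subSn // geom_sumS mulrDr -exprD subnKC.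
Qed.

Lemma subr_expr_geom_sum (n : nat) :
  1 - phi ^+ n = (1 - phi) * geom_sum n.
Proof. by rewrite -opprB subrX1 -mulNr opprB. Qed.

Hypothesis phi_ge0 : 0 <= phi.

Lemma geom_sum_ge0 n : 0 <= geom_sum n.
Proof. by apply: sumr_ge0 => k _; rewrite exprn_ge0. Qed.

Lemma geom_sum_gt0 n : (0 < n)%N -> 0 < geom_sum n.
Proof.
case: n => // n _; rewrite -add1n geom_sumD {1}/geom_sum big_ord1 expr0 expr1.
by have := mulr_ge0 phi_ge0 (geom_sum_ge0 n); lra.
Qed.

Hypothesis phi_le1 : phi <= 1.

Lemma geom_sum_ratio_le k j :
  geom_sum k * geom_sum (k + j).+1 <= geom_sum k.+1 * geom_sum (k + j).
Proof.
rewrite !geom_sumS geom_sumD exprD.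
set A := geom_sum k; set B := geom_sum j; set c := phi ^+ k; set d := phi ^+ j.
have A0 : 0 <= A := geom_sum_ge0 k; have B0 : 0 <= B := geom_sum_ge0 j.
have c0 : 0 <= c by rewrite exprn_ge0.
have d1 : d <= 1 by rewrite exprn_ile1.
rewrite -subr_ge0 (_ : _ - _ = c * A * (1 - d) + c * c * B); last by ring.
by rewrite addr_ge0 ?mulr_ge0 ?subr_ge0.
Qed.

Lemma geom_sum_pow_le n s : (0 < n)%N ->
  geom_sum (n - s) * geom_sum n ^+ s <= geom_sum n * geom_sum n.-1 ^+ s.
Proof.
move=> n_gt0; elim: s => [|s IHs]; first by rewrite subn0 !expr0.
have cross : geom_sum (n - s.+1) * geom_sum n <=
               geom_sum (n - s) * geom_sum n.-1.
  case: (ltnP s n) => [sn|ns]; last first.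
    have -> : (n - s.+1 = 0)%N by lia.
    by rewrite /geom_sum big_ord0 mul0r mulr_ge0 ?geom_sum_ge0.
  have := geom_sum_ratio_le (n - s.+1) s.
  have -> : ((n - s.+1 + s).+1 = n)%N by lia.
  have -> : ((n - s.+1).+1 = n - s)%N by lia.
  by have -> : (n - s.+1 + s = n.-1)%N by lia.
rewrite !exprS mulrA [X in _ <= X]mulrCA.
apply: le_trans (ler_wpM2r (exprn_ge0 s (geom_sum_ge0 n)) cross) _.
by rewrite mulrAC mulrC ler_wpM2l ?geom_sum_ge0.
Qed.

End GeomSum.

Lemma geom_sum_1 (R : realFieldType) (n : nat) : geom_sum (1 : R) n = n%:R.
Proof.
rewrite /geom_sum (eq_bigr (fun _ => 1)) ?sumr_const ?card_ord //.
by move=> i _; rewrite expr1n.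
Qed.

Section MallowsMass.
Variables (R : realFieldType) (phi : R).

Definition mallows_mass (m : nat) (E : {set 'S_m}) : R :=
  \sum_(q in E) phi ^+ kendall q 1.

Lemma sum_kendall_lift_perm (m : nat) (P : pred 'S_m.+1) :
  \sum_(q | P q) phi ^+ kendall q 1 =
  \sum_(x : 'I_m.+1) phi ^+ x * \sum_(r | P (lift_perm x ord0 r)) phi ^+ kendall r 1.
Proof.
rewrite sum_perm_lift_perm; apply: eq_bigr => x _; rewrite mulr_sumr.
by apply: eq_bigr => r _; rewrite kendall_lift_perm exprD.
Qed.

Lemma mallows_ZS (m : nat) : mallows_Z phi m.+1 = mallows_Z phi m * geom_sum phi m.+1.
Proof. by rewrite /mallows_Z big_ord_recr. Qed.

Lemma sum_kendall1 (m : nat) : \sum_(q : 'S_m) phi ^+ kendall q 1 = mallows_Z phi m.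
Proof.
elim: m => [|m IHm].
  rewrite /mallows_Z big_ord0 (eq_bigr (fun _ => 1)) ?sumr_const ?card_Sn //.
  by move=> q _; rewrite kendall1E big_ord0.
by rewrite sum_kendall_lift_perm IHm -mulr_suml mulrC mallows_ZS.
Qed.

Lemma mallows_mass_setT (m : nat) : mallows_mass [set: 'S_m] = mallows_Z phi m.
Proof. by rewrite -sum_kendall1; apply: eq_bigl => q; rewrite inE. Qed.

Lemma mallows_mass_top_s_below_S (m s tau : nat) :
  mallows_mass (top_s_below (1 : 'S_m.+1) s tau.+1) =
  phi ^+ s * geom_sum phi (m.+1 - s) * mallows_mass (top_s_below (1 : 'S_m) s tau).
Proof.
rewrite /mallows_mass sum_kendall_lift_perm -geom_sum_tail mulr_suml [RHS]big_mkcond /=.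
apply: eq_bigr => x _; under eq_bigl => r do rewrite lift_perm_top_s_below.
by case: (s <= x)%N; rewrite ?mul0r // big_pred0 ?mulr0.
Qed.

Hypotheses (phi_ge0 : 0 <= phi) (phi_le1 : phi <= 1).

Lemma mallows_mass_ge0 (m : nat) (E : {set 'S_m}) : 0 <= mallows_mass E.
Proof. by apply: sumr_ge0 => q _; rewrite exprn_ge0. Qed.

Lemma mallows_mass_top_s_below_le (m s tau : nat) : (tau <= m)%N ->
  mallows_mass (top_s_below (1 : 'S_m) s tau) * geom_sum phi m ^+ s <=
  mallows_Z phi m * phi ^+ (s * tau) * geom_sum phi (m - tau) ^+ s.
Proof.
elim: tau m => [m _|tau IHtau [//|m] le_tau_m].
  by rewrite top_s_below0 mallows_mass_setT muln0 expr0 mulr1 subn0.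
rewrite mallows_mass_top_s_below_S subSS mallows_ZS mulnS exprD.
set M := mallows_mass _; set G := geom_sum phi.
have IH : M * G m ^+ s <= mallows_Z phi m * phi ^+ (s * tau) * G (m - tau)%N ^+ s.
  exact: IHtau.
have shift : G (m.+1 - s)%N * G m.+1 ^+ s <= G m.+1 * G m ^+ s.
  exact: geom_sum_pow_le.
apply: (@le_trans _ _ ((phi ^+ s * M) * (G m.+1 * G m ^+ s))).
  rewrite [X in X <= _](_ : _ = phi ^+ s * M * (G (m.+1 - s)%N * G m.+1 ^+ s)); last by ring.
  by rewrite ler_wpM2l ?mulr_ge0 ?exprn_ge0 ?mallows_mass_ge0.
rewrite mulrACA [X in _ <= X](_ : _ = phi ^+ s * G m.+1 *
  (mallows_Z phi m * phi ^+ (s * tau) * G (m - tau)%N ^+ s)); last by ring.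
by rewrite ler_wpM2l ?mulr_ge0 ?exprn_ge0 ?geom_sum_ge0.
Qed.

End MallowsMass.

Lemma mallows_prob1 (R : realFieldType) (phi : R) (m : nat) (E : {set 'S_m}) :
  mallows_prob phi 1 E = mallows_mass phi E / mallows_Z phi m.
Proof. by rewrite /mallows_prob /mallows_pmf mulr_suml. Qed.

Lemma mallows_prob_relabel (R : realFieldType) (phi : R) (m s tau : nat)
    (sigma : 'S_m) :
  mallows_prob phi sigma (top_s_below sigma s tau) =
  mallows_prob phi (1 : 'S_m) (top_s_below 1 s tau).
Proof.
rewrite /mallows_prob (reindex_inj (mulgI sigma)) /=.
apply: eq_big => q; first exact: top_s_below_mul.
by move=> _; rewrite /mallows_pmf -(kendall_relabel sigma q 1) mulg1.
Qed.

Theorem lemma2 (R : realFieldType) (m : nat) (phi : R) (sigma : 'S_m)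
  (tau s : nat) :
  0 <= phi -> phi <= 1 ->
  (1 <= tau)%N -> (tau <= m)%N -> (s <= m)%N ->
  mallows_prob phi sigma (top_s_below sigma s tau) <=
    (if phi < 1 then
       phi ^+ (tau * s) * (1 - phi ^+ (m - tau)) ^+ s / (1 - phi ^+ m) ^+ s
     else (1 - tau%:R / m%:R) ^+ s).
Proof.
move=> phi_ge0 phi_le1 tau_ge1 le_tau_m _.
have m_gt0 : (0 < m)%N := leq_trans tau_ge1 le_tau_m.
have G_gt0 := geom_sum_gt0 phi_ge0 m_gt0.
have Z_gt0 : 0 < mallows_Z phi m.
  by apply: prodr_gt0 => j _; apply: geom_sum_gt0.
have bound : mallows_prob phi sigma (top_s_below sigma s tau) <=
             phi ^+ (s * tau) * (geom_sum phi (m - tau) / geom_sum phi m) ^+ s.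
  rewrite mallows_prob_relabel mallows_prob1 ler_pdivrMr // expr_div_n mulrA.
  rewrite mulrAC ler_pdivlMr ?exprn_gt0 //.
  apply: le_trans (mallows_mass_top_s_below_le phi_ge0 phi_le1 s le_tau_m) _.
  by rewrite [X in _ <= X]mulrC mulrA.
case: ifP => [phi_lt1 | phi_nlt1].
  have nz : (1 - phi) ^+ s != 0 by rewrite expf_neq0 // subr_eq0 eq_sym lt_eqF.
  by rewrite !subr_expr_geom_sum !exprMn mulnC -mulrA -mulf_div divff // mul1r -expr_div_n.
have phi1 : phi = 1 by apply/eqP; rewrite eq_le phi_le1 leNgt phi_nlt1.
move: bound; rewrite phi1 !geom_sum_1 expr1n mul1r natrB // mulrBl divff //.
by rewrite pnatr_eq0 -lt0n.
Qed.
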